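(* Let $q$ be a power of a prime $p$ and let $X=\{F=0\}\subset\mathbb{P}^n$ be a Frobenius nonclassical hypersurface of degree $d$ over $\mathbb{F}_q$. Assume there exists a line $L\subset\mathbb{P}^n$ defined over $\mathbb{F}_q$ with $L\not\subset X$ such that the intersection $X\cap L$ is not a $p$-th power (i.e. the binary form $F|_L$ is not a $p$-th power). Then $X\cap L$ contains at least one $\mathbb{F}_q$-point, and the intersection multiplicity of $X$ and $L$ at every point of $X\cap L$ not defined over $\mathbb{F}_q$ is divisible by $p$.
   Context: $X$ is Frobenius nonclassical if $F$ divides $\sum_{i=0}^n x_i^q\frac{\partial F}{\partial x_i}$. *)

From HB Require Import structures.
From mathcomp Require Import all_boot all_order all_algebra all_field.
From mathcomp Require Export mpoly.
Set Implicit Arguments. Unset Strict Implicit. Unset Printing Implicit Defensive.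
Import GRing.Theory.
Local Open Scope ring_scope.

Definition mdvd (n : nat) (R : ringType) (a b : {mpoly R[n]}) : Prop :=
  exists c : {mpoly R[n]}, b = c * a.

Definition bS (R : ringType) : {mpoly R[2]} := 'X_(@ord0 1).
Definition bT (R : ringType) : {mpoly R[2]} := 'X_(@ord_max 1).

Definition frob_nonclassical (n : nat) (R : ringType) (q : nat)
  (F : {mpoly R[n]}) : Prop :=
  mdvd F (\sum_(i < n) 'X_i ^+ q * F^`M(i)).

(* Restriction F|_L of F to the line L spanned by the vectors P, Q:
   the binary form (s,t) |-> F(s P + t Q). *)
Definition restrict_line (n : nat) (R : ringType) (F : {mpoly R[n]})
  (P Q : 'I_n -> R) : {mpoly R[2]} :=
  F \mPo [tuple P i *: bS R + Q i *: bT R | i < n].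

Definition lin_indep2 (n : nat) (R : ringType) (P Q : 'I_n -> R) : Prop :=
  forall a b : R, (forall i, a * P i + b * Q i = 0) -> a = 0 /\ b = 0.

Definition is_pth_power (R : ringType) (p : nat) (G : {mpoly R[2]}) : Prop :=
  exists H : {mpoly R[2]}, G = H ^+ p.

Definition eval2 (R : ringType) (G : {mpoly R[2]}) (a b : R) : R :=
  G.@[fun i : 'I_2 => if val i == 0%N then a else b].

(* The point [a:b] of P^1(K) is defined over k (via iota). *)
Definition rational_pt (k K : fieldType) (iota : {rmorphism k -> K}) (a b : K) : Prop :=
  exists u v : k, (u != 0 \/ v != 0) /\ a * iota v = b * iota u.

Definition is_mult_at (K : fieldType) (G : {mpoly K[2]}) (a b : K) (m : nat) : Prop :=
  let l := b *: bS K - a *: bT K in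
  mdvd (l ^+ m) G /\ ~ mdvd (l ^+ m.+1) G.

(* Let G be the binary form F(s P + t Q), q = #|k|.  Restricting the Frobenius
   nonclassical condition to the F_q-line gives G | s^q G_s + t^q G_t.
   Combined with Euler's formula s G_s + t G_t = d G this yields
   G | (s^q - s t^(q-1)) G_s, and s^q - s t^(q-1) is the product of the
   linear forms s - u t, u in F_q.  If G had no F_q-rational zero, each of
   these prime forms would be coprime to G, so G would divide G_s, forcing
   G_s = 0, then G_t = 0, i.e. G is a p-th power.
   At a zero [a : b] of exact multiplicity m, write G = l^m U with
   l = b s - a t.  Then s^q G_s + t^q G_t is congruent to
   m U l^(m-1) (b s^q - a t^q) modulo l^m, so l divides m U (b s^q - a t^q).
   If p does not divide m, l must divide b s^q - a t^q, i.e. b a^q = a b^q,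
   and [a : b] is F_q-rational. *)

From mathcomp Require Import all_boot all_order all_algebra all_field.
From mathcomp Require Import mpoly ring zify.
Import GRing.Theory.
Local Open Scope ring_scope.

Set Implicit Arguments.
Unset Strict Implicit.
Unset Printing Implicit Defensive.

Section MpolyDivisibility.
Variables (n : nat) (R : comNzRingType).
Implicit Types (l x y : {mpoly R[n]}).

Lemma mdvd0 l : mdvd l 0. Proof. by exists 0; rewrite mul0r. Qed.

Lemma mdvdD l x y : mdvd l x -> mdvd l y -> mdvd l (x + y).
Proof. by move=> [u ->] [v ->]; exists (u + v); rewrite mulrDl. Qed.

Lemma mdvdMl l x y : mdvd l x -> mdvd l (y * x).
Proof. by move=> [u ->]; exists (y * u); rewrite mulrA. Qed.

Lemma mdvdMr l x y : mdvd l x -> mdvd l (x * y).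
Proof. by rewrite mulrC; apply: mdvdMl. Qed.

Lemma mdvdZ l c x : mdvd l x -> mdvd l (c *: x).
Proof. by rewrite -mul_mpolyC; apply: mdvdMl. Qed.

Lemma mdvd_subM l x1 x2 y1 y2 :
  mdvd l (x1 - y1) -> mdvd l (x2 - y2) -> mdvd l (x1 * x2 - y1 * y2).
Proof.
move=> h1 h2; have -> : x1 * x2 - y1 * y2 = x1 * (x2 - y2) + (x1 - y1) * y2.
  by ring.
by apply: mdvdD; [apply: mdvdMl | apply: mdvdMr].
Qed.

Lemma mdvd_subX l x y e : mdvd l (x - y) -> mdvd l (x ^+ e - y ^+ e).
Proof.
move=> h; elim: e => [|e ih]; first by rewrite !expr0 subrr; apply: mdvd0.
by rewrite !exprS; apply: mdvd_subM.
Qed.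

End MpolyDivisibility.

Lemma mdvd_comp_mpolyB (R : comNzRingType) n k (l : {mpoly R[k]})
    (f : {mpoly R[n]}) (lq1 lq2 : n.-tuple {mpoly R[k]}) :
  (forall i, mdvd l (tnth lq1 i - tnth lq2 i)) ->
  mdvd l ((f \mPo lq1) - (f \mPo lq2)).
Proof.
move=> hl; rewrite !comp_mpolyE -sumrB.
apply: (big_ind (mdvd l)); [exact: mdvd0 | exact: mdvdD | move=> m _].
rewrite -scalerBr; apply: mdvdZ.
apply: (big_ind2 (fun x y => mdvd l (x - y))); first by rewrite subrr; apply: mdvd0.
  by move=> *; apply: mdvd_subM.
by move=> i _; apply: mdvd_subX.
Qed.

Lemma sum_ord2 (V : nmodType) (f : 'I_2 -> V) :
  \sum_(i < 2) f i = f ord0 + f ord_max.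
Proof. by rewrite big_ord_recr big_ord1; congr (f _ + _); apply: val_inj. Qed.

Lemma ord2_cases (i : 'I_2) : i = ord0 \/ i = ord_max.
Proof. by case: i => [[|[|//]] ?]; [left | right]; apply: val_inj. Qed.

Lemma exprD_card (k : finFieldType) (A : comAlgType k) (x y : A) :
  (x + y) ^+ #|k| = x ^+ #|k| + y ^+ #|k|.
Proof.
have [p _ pk] := finPcharP k.
apply: exprDn_pchar; rewrite (card_pprimeChar pk) pnatX (eq_pnat _ (pchar_lalg A)).
by rewrite (eq_pnat _ (pcharf_eq pk)) pnat_id ?(pcharf_prime pk).
Qed.

Lemma mderivXU (R : nzRingType) n (i j : 'I_n) :
  ('X_i : {mpoly R[n]})^`M(j) = (i == j)%:R%:MP.
Proof.
rewrite mderivX mnm1E; have [->|_] := eqVneq i j; last by rewrite scale0r.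
by rewrite -{1}[U_(j)%MM]add0m addmK mpolyX0 scale1r.
Qed.

Lemma mderiv_exprS (R : comNzRingType) n (x : {mpoly R[n]}) i e :
  (x ^+ e.+1)^`M(i) = x ^+ e * x^`M(i) *+ e.+1.
Proof.
elim: e => [|e ih]; first by rewrite expr1 expr0 mul1r.
by rewrite exprS mderivM ih mulrnAr mulrA -exprS (mulrC x^`M(i)) -mulrS.
Qed.

Lemma mderiv_map_mpoly (R S : nzRingType) (f : {rmorphism R -> S}) n
    (p : {mpoly R[n]}) i :
  map_mpoly f p^`M(i) = (map_mpoly f p)^`M(i).
Proof.
apply/mpolyP => m; rewrite mcoeff_map_mpoly !mcoeff_mderiv mcoeff_map_mpoly.
exact: raddfMn.
Qed.

Lemma mderiv_comp_mpoly (R : comNzRingType) n k (lq : n.-tuple {mpoly R[k]})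
    (j : 'I_k) (f : {mpoly R[n]}) :
  (f \mPo lq)^`M(j) = \sum_(i < n) (f^`M(i) \mPo lq) * (tnth lq i)^`M(j).
Proof.
pose chain g := (g \mPo lq)^`M(j) = \sum_(i < n) (g^`M(i) \mPo lq) * (tnth lq i)^`M(j).
have chainD g h : chain g -> chain h -> chain (g + h).
  rewrite /chain comp_mpolyD !mderivD => -> ->; rewrite -big_split /=.
  by apply: eq_bigr => i _; rewrite mderivD comp_mpolyD mulrDl.
have chainM g h : chain g -> chain h -> chain (g * h).
  rewrite /chain rmorphM /= !mderivM => -> ->.
  rewrite mulr_suml mulr_sumr -big_split /=.
  by apply: eq_bigr => i _; rewrite mderivM rmorphD /= !rmorphM /=; ring.
have chainC c : chain c%:MP.
  rewrite /chain comp_mpolyC mderivC big1 // => i _.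
  by rewrite mderivC comp_mpolyC mul0r.
have chainX i : chain 'X_i.
  rewrite /chain comp_mpolyXU -tnth_nth (bigD1 i) //= big1 ?addr0 => [|i' /negPf ne].
    by rewrite mderivXU eqxx comp_mpolyC mul1r.
  by rewrite mderivXU eq_sym ne comp_mpolyC mul0r.
rewrite [f]mpolyE; apply: (big_ind chain); [exact: (chainC 0) | exact: chainD |] => m _.
rewrite -mul_mpolyC; apply: (chainM) => //; rewrite mpolyXE_id.
apply: (big_ind chain); [exact: (chainC 1) | exact: chainM |] => i _.
by elim: (m i) => [|e ih]; [exact: (chainC 1) | rewrite exprS; apply: chainM].
Qed.

Lemma mpoly_euler (R : comNzRingType) n d (p : {mpoly R[n]}) : p \is d.-homog ->
  \sum_(i < n) 'X_i * p^`M(i) = d%:R *: p.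
Proof.
move=> /dhomogP p_homog; rewrite {1 2}[p]mpolyE scaler_sumr.
under eq_bigr => i _ do rewrite linear_sum mulr_sumr.
rewrite exchange_big /=; apply: eq_big_seq => m m_supp.
have -> : d = mdeg m by rewrite -(p_homog m m_supp).
under eq_bigr => i _ do rewrite mderivZ mderivX -!scalerAr -mpolyXD.
rewrite mdegE natr_sum scaler_suml; apply: eq_bigr => i _.
rewrite scalerA mulrC -scalerA; case m_i: (m i) => [|e]; first by rewrite !scale0r.
rewrite addmC submK //; apply/mnm_lepP => j; rewrite mnm1E.
by case: eqP => [<-|]; rewrite ?m_i.
Qed.

Lemma comp_mpoly_dhomog (R : comNzRingType) n k d (F : {mpoly R[n]})
    (lq : n.-tuple {mpoly R[k]}) :
  F \is d.-homog -> (forall i, tnth lq i \is 1.-homog) -> F \mPo lq \is d.-homog.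
Proof.
move=> /dhomogP F_homog lq_homog; rewrite comp_mpolyE big_seq.
apply: rpred_sum => m m_supp.
have -> : d = (\sum_i m i)%N by rewrite -mdegE (F_homog m m_supp).
rewrite rpredZ //.
elim/big_rec2: _ => [|i x e _ e_homog]; first exact: dhomog1.
apply: dhomogM => //; rewrite -[X in X.-homog]mul1n; exact: dhomogMn.
Qed.

Lemma frob_nonclassical_restrict_line (k : finFieldType) n (F : {mpoly k[n]})
    (P Q : 'I_n -> k) :
  frob_nonclassical #|k| F -> frob_nonclassical #|k| (restrict_line F P Q).
Proof.
rewrite /restrict_line; set lq := [tuple _ | i < n] => [[c hc]].
have lq_frob i : tnth lq i ^+ #|k| = \sum_(j < 2) 'X_j ^+ #|k| * (tnth lq i)^`M(j).
  rewrite sum_ord2 tnth_mktuple exprD_card !exprZn !expf_card /bS /bT.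
  rewrite !mderivD !mderivZ !mderivXU /= !mpolyC0 !mpolyC1 !scaler0 addr0 add0r.
  by rewrite -!mul_mpolyC !mulr1 !(mulrC _ _%:MP).
exists (c \mPo lq); rewrite -rmorphM /= -hc rmorph_sum /=.
under eq_bigr => j _ do rewrite mderiv_comp_mpoly mulr_sumr.
rewrite exchange_big /=; apply: eq_bigr => i _.
rewrite rmorphM rmorphXn /= comp_mpolyXU -tnth_nth lq_frob mulr_suml.
by apply: eq_bigr => j _; rewrite mulrCA mulrC.
Qed.

Lemma frob_nonclassical_map_mpoly (R S : comNzRingType) (f : {rmorphism R -> S}) q n
    (G : {mpoly R[n]}) :
  frob_nonclassical q G -> frob_nonclassical q (map_mpoly f G).
Proof.
move=> [c G_frob]; exists (map_mpoly f c); rewrite -rmorphM -G_frob rmorph_sum.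
by apply: eq_bigr => i _; rewrite rmorphM rmorphXn /= map_mpolyX mderiv_map_mpoly.
Qed.

Lemma msize_dhomog (R : nzRingType) n d (p : {mpoly R[n]}) :
  p != 0 -> p \is d.-homog -> msize p = d.+1.
Proof.
move=> p_neq0 hd; have := dhomog_uniq p_neq0 hd (dhomog_msize hd).
by rewrite -msize_poly_eq0 in p_neq0; case: (msize p) p_neq0 => // m _ ->.
Qed.

Lemma msize_mderiv_lt (R : nzRingType) n (p : {mpoly R[n]}) i :
  p != 0 -> (msize p^`M(i) < msize p)%N.
Proof.
rewrite -msize_poly_eq0 -lt0n => p_gt0.
rewrite -(prednK p_gt0) ltnS [msize p^`M(i)]msizeE.
apply/bigmax_leqP_seq => m; rewrite mcoeff_msupp mcoeff_mderiv => m_supp _.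
have /msize_mdeg_lt : (m + U_(i))%MM \in msupp p.
  by rewrite mcoeff_msupp; apply: contraNneq m_supp => ->; rewrite mul0rn.
by rewrite mdegD mdeg1 addn1 -(prednK p_gt0).
Qed.

Lemma mderiv_eq0_of_mdvd (K : idomainType) n (G : {mpoly K[n]}) i :
  mdvd G G^`M(i) -> G^`M(i) = 0.
Proof.
move=> [c dG]; apply/eqP/negPn/negP => dG_neq0.
have G_neq0 : G != 0 by apply: contraNneq dG_neq0; rewrite dG => ->; rewrite mulr0.
have c_neq0 : c != 0 by apply: contraNneq dG_neq0; rewrite dG => ->; rewrite mul0r.
have c_gt0 : (0 < msize c)%N by rewrite lt0n msize_poly_eq0.
by have := msize_mderiv_lt i G_neq0; rewrite dG msizeM //; lia.
Qed.

Lemma mderiv_eq0_dvdn (R : idomainType) p n (G : {mpoly R[n]}) m i :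
  p \in [pchar R] -> G^`M(i) = 0 -> m \in msupp G -> (p %| m i)%N.
Proof.
move=> pR dG0 m_supp; case m_i: (m i) => [|e]; first exact: dvdn0.
have /(congr1 (mcoeff (m - U_(i)))) := dG0.
have le_Um : (U_(i) <= m)%MM.
  by apply/mnm_lepP => j; rewrite mnm1E; case: eqP => [<-|]; rewrite ?m_i.
rewrite mcoeff_mderiv mcoeff0 submK // mnmBE mnm1E eqxx m_i subn1 /= -mulr_natr.
by move/eqP; rewrite mulf_eq0 mcoeff_eq0 m_supp (dvdn_pcharf pR).
Qed.

Lemma mderiv_eq0_pth_power (k : finFieldType) p n (G : {mpoly k[n]}) :
  p \in [pchar k] -> (forall i, G^`M(i) = 0) -> exists H, G = H ^+ p.
Proof.
move=> pk dG0.
have [root _ rootK] := injF_bij (fmorph_inj (pFrobenius_aut pk)).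
pose div_p (m : 'X_{1..n}) := [multinom (m i %/ p)%N | i < n].
exists (\sum_(m <- msupp G) root G@_m *: 'X_[div_p m]).
have pA : p \in [pchar {mpoly k[n]}] by rewrite pchar_lalg.
rewrite -(pFrobenius_autE pA) rmorph_sum {1}[G]mpolyE; apply: eq_big_seq => m m_supp.
rewrite /= pFrobenius_autE exprZn -(pFrobenius_autE pk) rootK mpolyXn.
congr (_ *: 'X_[_]); apply/mnmP => i.
by rewrite mulmnE mnmE divnK // (mderiv_eq0_dvdn pk (dG0 i)).
Qed.

Definition lform (R : nzRingType) (a b : R) : {mpoly R[2]} := b *: bS R - a *: bT R.

Lemma lform_dhomog (R : nzRingType) (a b : R) : lform a b \is 1.-homog.
Proof. by rewrite rpredB ?rpredZ // dhomogX /= mdeg1. Qed.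

Lemma eval2_lform (R : comNzRingType) (a b x y : R) :
  eval2 (lform a b) x y = b * x - a * y.
Proof. by rewrite /eval2 /lform mevalB !mevalZ /bS /bT !mevalXU. Qed.

Lemma eval2_mdvd_lform (R : comNzRingType) (a b : R) f :
  mdvd (lform a b) f -> eval2 f a b = 0.
Proof.
move=> [c ->]; have := eval2_lform a b a b; rewrite /eval2 mevalM => ->.
by rewrite (mulrC b) subrr mulr0.
Qed.

Lemma mderiv_lform (R : comNzRingType) (a b : R) :
  (lform a b)^`M(ord0) = b%:MP /\ (lform a b)^`M(ord_max) = (- a)%:MP.
Proof.
rewrite /lform /bS /bT !mderivB !mderivZ !mderivXU /= !mpolyC0 !mpolyC1.
by rewrite !scaler0 -!mul_mpolyC !mulr1 subr0 sub0r mpolyCN.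
Qed.

(* A parametrisation of the line [b s = a t]: substituting it into [f] kills
   exactly the multiples of [lform a b], which makes [lform a b] prime. *)
Definition lform_generic_pt (K : fieldType) (a b : K) : 2.-tuple {mpoly K[2]} :=
  if b == 0 then [tuple bS K; 0] else [tuple (a / b) *: bT K; bT K].

Section LinearForm.
Variables (K : fieldType) (a b : K).
Hypothesis ab_neq0 : a != 0 \/ b != 0.
Local Notation l := (lform a b).
Local Notation pt := (lform_generic_pt a b).

Lemma lform_neq0 : l != 0.
Proof.
apply/eqP => l0; have eval0 x y : b * x - a * y = 0.
  by rewrite -eval2_lform l0 /eval2 meval0.
case: ab_neq0 => /eqP; apply.
  by have := eval0 0 1; rewrite mulr0 mulr1 sub0r => /eqP; rewrite oppr_eq0 => /eqP.
by have := eval0 1 0; rewrite mulr0 mulr1 subr0.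
Qed.

Lemma lform_comp_generic_pt : l \mPo pt = 0.
Proof.
rewrite /lform /lform_generic_pt; case: eqP => [->|/eqP b_neq0];
  rewrite comp_mpolyB !comp_mpolyZ /bS /bT !comp_mpolyXU /=.
- by rewrite scale0r scaler0 subrr.
- by rewrite scalerA mulrC mulfVK // subrr.
Qed.

Lemma mdvd_lform_sub_comp f : mdvd l (f - (f \mPo pt)).
Proof.
rewrite -{1}[f]comp_mpoly_id; apply: mdvd_comp_mpolyB => i.
rewrite tnth_mktuple (tnth_nth 0) /lform_generic_pt.
have [b0|b_neq0] := eqVneq b 0; case: (ord2_cases i) => -> /=.
- by rewrite subrr; apply: mdvd0.
- have a_neq0 : a != 0 by case: ab_neq0; rewrite ?b0 ?eqxx.
  exists (- a^-1)%:MP; rewrite subr0 /lform b0 scale0r sub0r mul_mpolyC.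
  by rewrite scaleNr scalerN opprK scalerA mulVf // scale1r.
- exists b^-1%:MP; rewrite /lform mul_mpolyC scalerBr !scalerA mulVf //.
  by rewrite scale1r mulrC.
- by rewrite subrr; apply: mdvd0.
Qed.

Lemma mdvd_lformP f : mdvd l f <-> f \mPo pt = 0.
Proof.
split=> [[c ->]|f0]; first by rewrite rmorphM /= lform_comp_generic_pt mulr0.
by have := mdvd_lform_sub_comp f; rewrite f0 subr0.
Qed.

Lemma mdvd_lformM f g : mdvd l (f * g) -> mdvd l f \/ mdvd l g.
Proof.
rewrite !mdvd_lformP rmorphM /= => /eqP.
by rewrite mulf_eq0 => /orP[] /eqP; [left|right].
Qed.

End LinearForm.

Lemma eval2_prod_lform (K : fieldType) (r : seq K) x y :
  eval2 (\prod_(u <- r) lform u 1) x y = \prod_(u <- r) (x - u * y).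
Proof.
rewrite /eval2 rmorph_prod; apply: eq_bigr => u _.
by rewrite /= -/(eval2 _ x y) eval2_lform mul1r.
Qed.

Lemma prod_lform_dhomog (K : fieldType) (r : seq K) :
  \prod_(u <- r) lform u 1 \is (size r).-homog.
Proof.
elim: r => [|u r ih]; first by rewrite big_nil dhomog1.
by rewrite big_cons -[size _]add1n; apply: dhomogM => //; apply: lform_dhomog.
Qed.

Lemma mdvd_prod_lform (K : fieldType) (r : seq K) f : uniq r ->
  (forall u, u \in r -> mdvd (lform u 1) f) -> mdvd (\prod_(u <- r) lform u 1) f.
Proof.
elim: r => [|u r ih] /=; first by rewrite big_nil; exists f; rewrite mulr1.
move=> /andP[u_notin_r r_uniq] r_dvd.
have [g f_eq] : mdvd (\prod_(v <- r) lform v 1) f.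
  by apply: ih r_uniq _ => v v_r; apply: r_dvd; rewrite inE v_r orbT.
move: (r_dvd u (mem_head u r)); rewrite f_eq.
case/(mdvd_lformM (or_intror (oner_neq0 K))) => [[h ->]|/eval2_mdvd_lform].
  by exists h; rewrite big_cons mulrA.
rewrite eval2_prod_lform => /eqP; rewrite prodf_seq_eq0 => /hasP[v v_r].
by rewrite mulr1 subr_eq0 => /eqP u_v; rewrite u_v v_r in u_notin_r.
Qed.

Lemma mdvd_cancel_prod_lform (K : fieldType) (r : seq K) G f : uniq r ->
  (forall u, u \in r -> ~ mdvd (lform u 1) G) ->
  mdvd G (\prod_(u <- r) lform u 1 * f) -> mdvd G f.
Proof.
move=> r_uniq G_ndvd [x hx].
have one_neq0 : (1 : K) != 0 := oner_neq0 K.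
have [y x_eq] : mdvd (\prod_(u <- r) lform u 1) x.
  apply: mdvd_prod_lform r_uniq _ => u u_r.
  have : mdvd (lform u 1) (x * G).
    by rewrite -hx (big_rem u u_r) /= -mulrA; apply: mdvdMr; exists 1; rewrite mul1r.
  by case/(mdvd_lformM (or_intror one_neq0)) => // /G_ndvd.
exists y; apply: (mulfI (_ : \prod_(u <- r) lform u 1 != 0)).
  by rewrite prodf_seq_neq0; apply/allP => u _; apply: lform_neq0; right.
by rewrite hx x_eq mulrCA mulrA.
Qed.

Lemma prod_lform_finField (k : finFieldType) :
  \prod_(u <- enum k) lform u 1 = bS k ^+ #|k| - bS k * bT k ^+ #|k|.-1.
Proof.
(* Pi divides W; both are nonzero forms of degree q taking the value 1 at
   (1, 0). *)
set Pi := \prod_(u <- _) _; set W := _ - _.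
have q_gt1 := card_finNzRing_gt1 k; have q_gt0 := ltnW q_gt1.
have one_neq0 : (1 : k) != 0 := oner_neq0 k.
have X_homog i : ('X_i : {mpoly k[2]}) \is 1.-homog by rewrite dhomogX /= mdeg1.
have W_homog : W \is #|k|.-homog.
  apply: rpredB; first by have := dhomogMn #|k| (X_homog ord0); rewrite mul1n.
  have := dhomogM (X_homog ord0) (dhomogMn #|k|.-1 (X_homog ord_max)).
  by rewrite mul1n add1n prednK.
have W10 : eval2 W 1 0 = 1.
  have qm1_neq0 : (#|k|.-1 != 0)%N by rewrite -lt0n -ltnS prednK.
  rewrite /eval2 mevalB mevalM !rmorphXn /= /bS /bT !mevalXU /=.
  by rewrite expr1n expr0n (negPf qm1_neq0) mulr0 subr0.
have [c W_eq] : mdvd Pi W.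
  apply: mdvd_prod_lform (enum_uniq k) _ => u _.
  apply/(mdvd_lformP (or_intror one_neq0)).
  rewrite /lform_generic_pt (negPf one_neq0) divr1 /W rmorphB rmorphM !rmorphXn /=.
  rewrite /bS /bT !comp_mpolyXU /= exprZn expf_card -scalerAl -exprS prednK //.
  exact: subrr.
have Pi_neq0 : Pi != 0.
  by rewrite prodf_seq_neq0; apply/allP => u _; apply: lform_neq0; right.
have W_neq0 : W != 0.
  apply/eqP => W0; move: W10; rewrite W0 /eval2 meval0 => /eqP.
  by rewrite eq_sym oner_eq0.
have c_neq0 : c != 0 by apply: contraNneq W_neq0; rewrite W_eq => ->; rewrite mul0r.
have Pi_homog : Pi \is #|k|.-homog.
  by have := prod_lform_dhomog (enum k); rewrite -cardT.
have c_size : msize c = 1%N.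
  have := msizeM c_neq0 Pi_neq0; rewrite -W_eq.
  rewrite (msize_dhomog W_neq0 W_homog) (msize_dhomog Pi_neq0 Pi_homog) addnS /=.
  by rewrite -[X in X = _]add1n => /addIn.
have Pi10 : eval2 Pi 1 0 = 1.
  by rewrite eval2_prod_lform big1 // => u _; rewrite mulr0 subr0.
move: W10; rewrite W_eq (msize1_polyC (eq_leq c_size)) /eval2 mevalM mevalC.
by rewrite -/(eval2 Pi 1 0) Pi10 mulr1 => ->; rewrite mul1r.
Qed.

Lemma frob_nonclassical_euler (R : comNzRingType) q d (G : {mpoly R[2]}) :
  (0 < q)%N -> G \is d.-homog -> frob_nonclassical q G ->
  mdvd G ((bS R ^+ q - bS R * bT R ^+ q.-1) * G^`M(ord0)).
Proof.
case: q => // q _ G_homog [C G_frob]; exists (C - bT R ^+ q * d%:R%:MP).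
have euler := mpoly_euler G_homog; rewrite sum_ord2 -mul_mpolyC in euler.
rewrite sum_ord2 in G_frob.
by rewrite [RHS]mulrBl -[in RHS]mulrA -euler -G_frob /bS /bT /= !exprS; ring.
Qed.

Lemma frob_nonclassical_no_rational_zero (k : finFieldType) d (G : {mpoly k[2]}) :
  G \is d.-homog -> frob_nonclassical #|k| G ->
  (forall a b : k, a != 0 \/ b != 0 -> eval2 G a b != 0) ->
  forall i, G^`M(i) = 0.
Proof.
move=> G_homog G_frob no_zero.
have one_neq0 : (1 : k) != 0 := oner_neq0 k.
have Gs0 : G^`M(ord0) = 0.
  apply: mderiv_eq0_of_mdvd; apply: (mdvd_cancel_prod_lform (enum_uniq k)).
    by move=> u _ /eval2_mdvd_lform; apply/eqP/no_zero; right.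
  rewrite prod_lform_finField; apply: frob_nonclassical_euler G_homog G_frob.
  exact: ltnW (card_finNzRing_gt1 k).
have euler := mpoly_euler G_homog; rewrite sum_ord2 Gs0 mulr0 add0r in euler.
have d0 : d%:R = 0 :> k.
  move: (congr1 (fun f => eval2 f 1 0) euler) (no_zero 1 0 (or_introl one_neq0)).
  rewrite /eval2 mevalM mevalZ mevalXU /= mul0r => /esym/eqP.
  by rewrite mulf_eq0 => /orP[/eqP // | /eqP ->]; rewrite eqxx.
have t_neq0 : bT k != 0 by rewrite -msize_poly_eq0 /bT msizeX.
have Gt0 : G^`M(ord_max) = 0.
  apply/eqP; move: euler; rewrite d0 scale0r => /eqP.
  by rewrite mulf_eq0 (negPf t_neq0).
by move=> i; case: (ord2_cases i) => ->.
Qed.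

Lemma frob_nonclassical_rational_zero (k : finFieldType) p d (G : {mpoly k[2]}) :
  p \in [pchar k] -> G \is d.-homog -> frob_nonclassical #|k| G ->
  ~ is_pth_power p G -> exists a b : k, (a != 0 \/ b != 0) /\ eval2 G a b = 0.
Proof.
move=> pk G_homog G_frob not_pth.
have [/existsP[a /existsP[b /andP[/orP ab /eqP Gab]]]|/negP no_zero] :=
  boolP [exists a : k, exists b : k, ((a != 0) || (b != 0)) && (eval2 G a b == 0)].
  by exists a, b.
case: not_pth; apply: mderiv_eq0_pth_power pk _.
apply: frob_nonclassical_no_rational_zero G_homog G_frob _ => a b ab.
apply/eqP => Gab; apply: no_zero; apply/existsP; exists a; apply/existsP; exists b.
by rewrite Gab eqxx andbT; case: ab => ->; rewrite ?orbT.
Qed.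

Lemma frob_nonclassical_mult_dvd (K : fieldType) p q (G : {mpoly K[2]}) (a b : K) m :
  p \in [pchar K] -> a != 0 \/ b != 0 -> frob_nonclassical q G ->
  b * a ^+ q - a * b ^+ q != 0 -> is_mult_at G a b m -> (p %| m)%N.
Proof.
move=> pK ab [C G_frob] frob_ab_neq0 [[U G_eq] not_dvd].
rewrite -/(lform a b) in G_eq not_dvd; set l := lform a b in G_eq not_dvd.
case: m G_eq not_dvd => [|e] G_eq not_dvd; first exact: dvdn0.
rewrite (dvdn_pcharf pK); apply/negPn/negP => m_neq0.
have [dl_s dl_t] := mderiv_lform a b.
pose W : {mpoly K[2]} := b%:MP * bS K ^+ q - a%:MP * bT K ^+ q.
pose DU := bS K ^+ q * U^`M(ord0) + bT K ^+ q * U^`M(ord_max).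
have expand : l ^+ e * (l * (C * U)) = l ^+ e * (l * DU + (e.+1)%:R * U * W).
  rewrite sum_ord2 G_eq !mderivM !mderiv_exprS dl_s dl_t in G_frob.
  rewrite mpolyCN in G_frob.
  have -> : l ^+ e * (l * (C * U)) = C * (U * l ^+ e.+1) by rewrite exprS; ring.
  by rewrite -G_frob /DU /W /bS /bT !exprS; ring.
have l_dvd : mdvd l ((e.+1)%:R * U * W).
  have {}expand := mulfI (expf_neq0 e (lform_neq0 ab)) expand.
  exists (C * U - DU); have -> : (C * U - DU) * l = l * (C * U) - l * DU by ring.
  by rewrite expand; ring.
case/(mdvd_lformM ab): l_dvd => [/(mdvd_lformM ab)[|[V U_eq]]|].
- move/eval2_mdvd_lform; rewrite /eval2 rmorph_nat => /eqP.
  by rewrite (negPf m_neq0).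
- by apply: not_dvd; exists V; rewrite G_eq U_eq -mulrA -exprS.
- move/eval2_mdvd_lform; rewrite /eval2 /W mevalB !mevalM !mevalC !rmorphXn /=.
  by rewrite /bS /bT !mevalXU /= => /eqP; rewrite (negPf frob_ab_neq0).
Qed.

Lemma frob_fixed_rational_pt (k : finFieldType) (K : fieldType)
    (iota : {rmorphism k -> K}) (a b : K) :
  b * a ^+ #|k| - a * b ^+ #|k| = 0 -> rational_pt iota a b.
Proof.
move=> frob_ab; have [b0|b_neq0] := eqVneq b 0.
  by exists 1, 0; split; [left; apply: oner_neq0 | rewrite b0 rmorph0 !mul0r mulr0].
have frob_fixed : (a / b) ^+ #|k| = a / b.
  rewrite expr_div_n; apply/eqP; rewrite eqr_div ?expf_neq0 //.
  by rewrite mulrC -subr_eq0 frob_ab.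
have /(congr1 (horner^~ (a / b))) := congr1 (map_poly iota) (finField_genPoly k).
rewrite rmorphB /= map_polyXn map_polyX rmorph_prod /= !hornerE frob_fixed subrr.
rewrite horner_prod => /esym/eqP/prodf_eq0[x _].
rewrite map_polyXsubC hornerXsubC subr_eq0 => /eqP ab_x.
exists x, 1; split; first by right; apply: oner_neq0.
by rewrite rmorph1 mulr1 -ab_x mulrC divfK.
Qed.

Theorem lemma2p2 (k : finFieldType) (p : nat) (n d : nat)
  (F : {mpoly k[n.+1]}) (P Q : 'I_n.+1 -> k) :
  prime p -> p \in [pchar k] ->
  F != 0 -> F \is d.-homog ->
  frob_nonclassical #|k| F ->
  lin_indep2 P Q ->
  restrict_line F P Q != 0 ->
  ~ is_pth_power p (restrict_line F P Q) ->
  (exists a b : k, (a != 0 \/ b != 0) /\ eval2 (restrict_line F P Q) a b = 0) /\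
  (forall (K : closedFieldType) (iota : {rmorphism k -> K}) (a b : K) (m : nat),
      (a != 0 \/ b != 0) ->
      eval2 (map_mpoly iota (restrict_line F P Q)) a b = 0 ->
      ~ rational_pt iota a b ->
      is_mult_at (map_mpoly iota (restrict_line F P Q)) a b m ->
      (p %| m)%N).
Proof.
move=> _ pk _ F_homog F_frob _ _ not_pth; set G := restrict_line F P Q.
have G_frob : frob_nonclassical #|k| G := frob_nonclassical_restrict_line P Q F_frob.
have G_homog : G \is d.-homog.
  apply: comp_mpoly_dhomog F_homog _ => i.
  by rewrite tnth_mktuple rpredD ?rpredZ // dhomogX /= mdeg1.
split; first exact: frob_nonclassical_rational_zero pk G_homog G_frob not_pth.
move=> K iota a b m ab _ not_rational.
apply: (frob_nonclassical_mult_dvd (q := #|k|) (rmorph_pchar iota pk) ab).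
- exact: frob_nonclassical_map_mpoly.
- by apply/eqP => frob_ab; apply/not_rational/frob_fixed_rational_pt.
Qed.
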